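(* Let $f:[0,\infty)\to[0,\infty)$ be such that there exists $C\ge1$ with $f(s)\le Cf(t)$ and $f(t)\frac{s}{t}\le C(f(s)+1)$ for all $t>s\ge0$. Then there exists $A\ge1$ such that for every $x\in(0,\infty)$, $A^{-1}F(x)-A\le f(x)\le F(x)$, where $F$ is the least concave majorant of $f$.
   Context: The least concave majorant $F$ of $f$ is the smallest concave function $F$ on $[0,\infty)$ with $f\le F$. *)

From Stdlib Require Import Reals.
Open Scope R_scope.

Definition concave_on_nonneg (F : R -> R) : Prop :=
  forall x y l, 0 <= x -> 0 <= y -> 0 <= l <= 1 ->
    l * F x + (1 - l) * F y <= F (l * x + (1 - l) * y).

Definition concave_majorant (f F : R -> R) : Prop :=
  concave_on_nonneg F /\ (forall x, 0 <= x -> f x <= F x).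

Definition least_concave_majorant (f F : R -> R) : Prop :=
  concave_majorant f F /\
  (forall G, concave_majorant f G -> forall x, 0 <= x -> F x <= G x).

(* The least concave majorant is the pointwise infimum of all concave majorants;
   it exists as soon as one concave majorant does.  The two growth conditions
   say that f is almost nondecreasing and that f(t)/t is almost nonincreasing,
   so for every x0 > 0 the affine function y |-> K + K y / x0 with
   K = C (f x0 + 1) lies above f on [0, +oo).  Evaluated at x0 it bounds the
   least concave majorant by 2C (f x0 + 1), which gives A = 2C. *)

From Stdlib Require Import Reals Lra.
Open Scope R_scope.

Lemma glb_exists (E : R -> Prop) (m : R) :
  (exists v, E v) -> (forall v, E v -> m <= v) ->
  { g | (forall v, E v -> g <= v) /\
        (forall m', (forall v, E v -> m' <= v) -> m' <= g) }.
Proof.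
  intros ne lb.
  destruct (completeness (fun u => E (- u))) as [s [ub least]].
  - exists (- m). intros u Eu. specialize (lb _ Eu). lra.
  - destruct ne as [v0 Ev0]. exists (- v0). now rewrite Ropp_involutive.
  - exists (- s). split.
    + intros v Ev. assert (h : - v <= s) by (apply ub; now rewrite Ropp_involutive).
      lra.
    + intros m' lb'. assert (h : s <= - m').
      { apply least. intros u Eu. specialize (lb' _ Eu). lra. }
      lra.
Qed.

Lemma least_concave_majorant_exists (f : R -> R) :
  (exists G, concave_majorant f G) -> exists F, least_concave_majorant f F.
Proof.
  intros [G0 HG0].
  (* Values at x < 0 are irrelevant; clamping to [Rmax 0 x] keeps every
     infimum bounded below by a value of f. *)
  set (values x v := exists G, concave_majorant f G /\ v = G (Rmax 0 x)).
  assert (values_lb : forall x v, values x v -> f (Rmax 0 x) <= v).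
  { intros x v [G [[_ HG] ->]]. apply HG, Rmax_l. }
  assert (values_ne : forall x, exists v, values x v).
  { intros x. exists (G0 (Rmax 0 x)), G0. now split. }
  set (F x := proj1_sig (glb_exists (values x) _ (values_ne x) (values_lb x))).
  assert (F_glb : forall x,
    (forall v, values x v -> F x <= v) /\
    (forall m, (forall v, values x v -> m <= v) -> m <= F x)).
  { intros x. exact (proj2_sig (glb_exists _ _ (values_ne x) (values_lb x))). }
  assert (F_least : forall G, concave_majorant f G -> forall x, 0 <= x -> F x <= G x).
  { intros G HG x hx. apply (proj1 (F_glb x)). exists G. rewrite Rmax_right; auto. }
  exists F. split; [split|]; [| |exact F_least].
  - intros x y l hx hy hl.
    assert (hz : 0 <= l * x + (1 - l) * y) by nra.
    apply (proj2 (F_glb _)). intros v [G [HG ->]]. rewrite Rmax_right by lra.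
    assert (hGx := F_least G HG x hx). assert (hGy := F_least G HG y hy).
    assert (hG := proj1 HG x y l hx hy hl).
    nra.
  - intros x hx. apply (proj2 (F_glb x)). intros v [G [[_ HG] ->]].
    rewrite Rmax_right by lra. now apply HG.
Qed.

Lemma concave_on_nonneg_affine (a b : R) : concave_on_nonneg (fun y => a + b * y).
Proof. intros x y l _ _ _. nra. Qed.

Section AlmostMonotone.

Variables (f : R -> R) (C : R).
Hypothesis f_nonneg : forall x, 0 <= x -> 0 <= f x.
Hypothesis C_ge1 : 1 <= C.
Hypothesis f_almost_monotone : forall s t, 0 <= s -> s < t ->
  f s <= C * f t /\ f t * (s / t) <= C * (f s + 1).

Definition affine_majorant (x0 y : R) : R :=
  C * (f x0 + 1) + C * (f x0 + 1) / x0 * y.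

Lemma le_affine_majorant (x0 y : R) : 0 < x0 -> 0 <= y -> f y <= affine_majorant x0 y.
Proof.
  intros hx0 hy. unfold affine_majorant.
  assert (hfx0 := f_nonneg x0 (Rlt_le _ _ hx0)).
  assert (hCfx0 : f x0 <= C * f x0) by nra.
  assert (hK : C * f x0 + 1 <= C * (f x0 + 1)) by nra.
  set (K := C * (f x0 + 1)) in *.
  assert (hKy : 0 <= K / x0 * y).
  { apply Rmult_le_pos; [apply Rle_mult_inv_pos|]; nra. }
  destruct (Rtotal_order y x0) as [lt | [-> | gt]].
  - destruct (f_almost_monotone y x0 hy lt) as [h _]. lra.
  - nra.
  - destruct (f_almost_monotone x0 y (Rlt_le _ _ hx0) gt) as [_ h]. fold K in h.
    assert (f y = f y * (x0 / y) * (y / x0)) by (field; lra).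
    assert (f y * (x0 / y) * (y / x0) <= K * (y / x0)).
    { apply Rmult_le_compat_r; [apply Rle_mult_inv_pos|]; lra. }
    assert (K * (y / x0) = K / x0 * y) by (field; lra).
    lra.
Qed.

Lemma concave_majorant_affine (x0 : R) : 0 < x0 -> concave_majorant f (affine_majorant x0).
Proof.
  intros hx0. split.
  - apply concave_on_nonneg_affine.
  - intros y hy. now apply le_affine_majorant.
Qed.

Lemma least_concave_majorant_le (F : R -> R) (x : R) :
  least_concave_majorant f F -> 0 < x -> F x <= 2 * C * (f x + 1).
Proof.
  intros [_ F_least] hx.
  assert (h := F_least _ (concave_majorant_affine x hx) x (Rlt_le _ _ hx)).
  unfold affine_majorant in h. replace (C * (f x + 1) / x * x) with (C * (f x + 1)) in h.
  - lra.
  - field. lra.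
Qed.

End AlmostMonotone.

Theorem proposition2p23 (f : R -> R)
  (f_nonneg : forall x, 0 <= x -> 0 <= f x)
  (hC : exists C, 1 <= C /\
     forall s t, 0 <= s -> s < t ->
       f s <= C * f t /\ f t * (s / t) <= C * (f s + 1)) :
  (exists F, least_concave_majorant f F) /\
  (forall F, least_concave_majorant f F ->
     exists A, 1 <= A /\
       forall x, 0 < x -> / A * F x - A <= f x /\ f x <= F x).
Proof.
  destruct hC as [C [C_ge1 hC]].
  split.
  - apply least_concave_majorant_exists.
    exists (affine_majorant f C 1). apply concave_majorant_affine; auto; lra.
  - intros F HF. exists (2 * C). split; [lra|].
    intros x hx. split; [| apply (proj2 (proj1 HF)); lra].
    assert (hF := least_concave_majorant_le f C f_nonneg C_ge1 hC F x HF hx).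
    assert (hfx := f_nonneg x (Rlt_le _ _ hx)).
    apply Rmult_le_compat_l with (r := / (2 * C)) in hF;
      [| left; apply Rinv_0_lt_compat; lra].
    replace (/ (2 * C) * (2 * C * (f x + 1))) with (f x + 1) in hF by (field; lra).
    lra.
Qed.
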